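(* Let $z_1,z_2,z_3$ be the (physical, real) coupling variables $z_i=\tanh K_i$ of the anisotropic triangular Ising model, and set $v_i=e^{-2K_i}=\frac{1-z_i}{1+z_i}$ for $i=1,2,3$. Define $$a=2z_3(1+z_1^2)(1+z_2^2)+4z_1z_2(1+z_3^2),\qquad c=(1-z_1^2)(1-z_2^2),\qquad b=z_3^2c,$$ and the Toeplitz matrix elements (Fourier coefficients) $$w_n=\int_{-\pi}^{\pi}\frac{d\theta}{2\pi}\,\frac{a\cos(n\theta)-b\cos((n-1)\theta)-c\cos((n+1)\theta)}{\sqrt{a^2+b^2+c^2-2a(b+c)\cos\theta+2bc\cos(2\theta)}},\qquad n\in\mathbb Z,$$ i.e. the Fourier coefficients of $w(\zeta)=\left(\frac{a-b\zeta-c\zeta^{-1}}{a-b\zeta^{-1}-c\zeta}\right)^{1/2}$ on $|\zeta|=1$. Let $\Gamma=1+v_1^2v_2^2-(v_1^2+v_2^2)v_3^2$. Then for every $n\in\mathbb Z$, \begin{multline*} (n-3)v_1^2v_2^2(1-v_3^2)^2w_{n-3}-2v_1v_2\Gamma\left[v_3+(n-2)(1+v_3^2)\right]w_{n-2}\\ +\Big[(n-1)(v_1^4+4v_1^2v_2^2+v_2^4)v_3^4-2(n-1)\left(v_1^2+v_2^2-6v_1^2v_2^2+v_1^4v_2^2+v_1^2v_2^4\right)v_3^2\\ +(n-1)(1+4v_1^2v_2^2+v_1^4v_2^4)+8v_1^2v_2^2v_3(1+v_3^2)\Big]w_{n-1}\\ -2v_1v_2\Gamma\left[v_3+n(1+v_3^2)\right]w_n+(n+1)v_1^2v_2^2(1-v_3^2)^2w_{n+1}=0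 . \end{multline*} In particular, for $n=-1$ and $n=3$ this relation involves only four consecutive terms (it is of third order).
   Context: The anisotropic triangular Ising model has nearest-neighbour couplings $K_1$ (horizontal), $K_2$ (vertical) and $K_3$ (up-right diagonal) on a square grid; $z_i=\tanh K_i\in[-1,1]$ and $v_i=e^{-2K_i}\in[0,\infty)$. The couplings are assumed such that the square root in the integrand is nonvanishing on $\theta\in[-\pi,\pi]$ (positive branch), so that the $w_n$ are well defined. *)

From Stdlib Require Import Reals ZArith.
From Coquelicot Require Import Coquelicot.
Open Scope R_scope.

Definition tanh (K : R) : R := (exp K - exp (- K)) / (exp K + exp (- K)).

Definition zv (K : R) : R := tanh K.
Definition vv (K : R) : R := exp (-2 * K).

Definition coef_a (z1 z2 z3 : R) : R :=
  2 * z3 * (1 + z1 ^ 2) * (1 + z2 ^ 2) + 4 * z1 * z2 * (1 + z3 ^ 2).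
Definition coef_c (z1 z2 z3 : R) : R := (1 - z1 ^ 2) * (1 - z2 ^ 2).
Definition coef_b (z1 z2 z3 : R) : R := z3 ^ 2 * coef_c z1 z2 z3.

Definition denom (a b c theta : R) : R :=
  a ^ 2 + b ^ 2 + c ^ 2 - 2 * a * (b + c) * cos theta + 2 * b * c * cos (2 * theta).

Definition wn (a b c : R) (n : Z) : R :=
  RInt (fun theta =>
          (a * cos (IZR n * theta) - b * cos (IZR (n - 1) * theta)
             - c * cos (IZR (n + 1) * theta)) / sqrt (denom a b c theta))
       (- PI) PI / (2 * PI).

Definition wK (K1 K2 K3 : R) (n : Z) : R :=
  let z1 := zv K1 in let z2 := zv K2 in let z3 := zv K3 in
  wn (coef_a z1 z2 z3) (coef_b z1 z2 z3) (coef_c z1 z2 z3) n.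

(* With N_s(t) = a cos(st) - b cos((s-1)t) - c cos((s+1)t) and D the radicand, the integrand of w_n
   is N_n / sqrt D.  The product-to-sum formulas show that the derivative of
   G_s = (- a sin((s-1)t) + b sin((s-2)t) + c sin(st)) sqrt D is a fixed linear combination of the
   N_(s+j) / sqrt D, j = -3..1, with coefficients polynomial in a, b, c, s.  For integer s, G_s
   vanishes at -pi and pi, so integrating gives a five-term recurrence for w_n in terms of a, b, c.
   After substituting z_i = (1 - v_i) / (1 + v_i), the stated recurrence is that one multiplied by
   -((1 + v1)(1 + v2)(1 + v3))^4 / 256. *)

From Pilot Require Import Defs.
From Stdlib Require Import Reals ZArith Lra Lia.
From Coquelicot Require Import Coquelicot.
Open Scope R_scope.

Lemma cos_mul_cos (p q : R) : cos p * cos q = (cos (p + q) + cos (p - q)) / 2.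
Proof. rewrite cos_plus, cos_minus; field. Qed.

Lemma sin_mul_sin (p q : R) : sin p * sin q = (cos (p - q) - cos (p + q)) / 2.
Proof. rewrite cos_plus, cos_minus; field. Qed.

Definition cos_shift (s t : R) (j : Z) : R := cos ((s + IZR j) * t).
Definition sin_shift (s t : R) (j : Z) : R := sin ((s + IZR j) * t).

Lemma cos_shift_mul_cos (s t : R) (j k : Z) :
  cos_shift s t j * cos (IZR k * t) = (cos_shift s t (j + k) + cos_shift s t (j - k)) / 2.
Proof.
  unfold cos_shift; rewrite cos_mul_cos, plus_IZR, minus_IZR.
  replace ((s + IZR j) * t + IZR k * t) with ((s + (IZR j + IZR k)) * t) by ring.
  replace ((s + IZR j) * t - IZR k * t) with ((s + (IZR j - IZR k)) * t) by ring.
  reflexivity.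
Qed.

Lemma sin_shift_mul_sin (s t : R) (j k : Z) :
  sin_shift s t j * sin (IZR k * t) = (cos_shift s t (j - k) - cos_shift s t (j + k)) / 2.
Proof.
  unfold sin_shift, cos_shift; rewrite sin_mul_sin, plus_IZR, minus_IZR.
  replace ((s + IZR j) * t + IZR k * t) with ((s + (IZR j + IZR k)) * t) by ring.
  replace ((s + IZR j) * t - IZR k * t) with ((s + (IZR j - IZR k)) * t) by ring.
  reflexivity.
Qed.

Lemma sin_shift_IZR_mul_PI (n k j : Z) : sin_shift (IZR n) (IZR k * PI) j = 0.
Proof.
  apply sin_eq_0_1; exists ((n + j) * k)%Z.
  rewrite mult_IZR, plus_IZR; ring.
Qed.

Definition comb3 (al be ga : R) (g : Z -> R) (k : Z) : R :=
  al * g (k - 1)%Z + be * g (k - 2)%Z + ga * g k.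

Lemma comb3_cos_shift_mul_cos (al be ga s t : R) (k q : Z) :
  comb3 al be ga (cos_shift s t) k * cos (IZR q * t)
  = (comb3 al be ga (cos_shift s t) (k + q) + comb3 al be ga (cos_shift s t) (k - q)) / 2.
Proof.
  unfold comb3; rewrite !Rmult_plus_distr_r, !Rmult_assoc, !cos_shift_mul_cos.
  replace (k - 1 + q)%Z with (k + q - 1)%Z by lia.
  replace (k - 2 + q)%Z with (k + q - 2)%Z by lia.
  replace (k - 1 - q)%Z with (k - q - 1)%Z by lia.
  replace (k - 2 - q)%Z with (k - q - 2)%Z by lia.
  field.
Qed.

Lemma comb3_sin_shift_mul_sin (al be ga s t : R) (k q : Z) :
  comb3 al be ga (sin_shift s t) k * sin (IZR q * t)
  = (comb3 al be ga (cos_shift s t) (k - q) - comb3 al be ga (cos_shift s t) (k + q)) / 2.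
Proof.
  unfold comb3; rewrite !Rmult_plus_distr_r, !Rmult_assoc, !sin_shift_mul_sin.
  replace (k - 1 + q)%Z with (k + q - 1)%Z by lia.
  replace (k - 2 + q)%Z with (k + q - 2)%Z by lia.
  replace (k - 1 - q)%Z with (k - q - 1)%Z by lia.
  replace (k - 2 - q)%Z with (k - q - 2)%Z by lia.
  field.
Qed.

Definition toeplitz_num (a b c s t : R) : R :=
  a * cos (s * t) - b * cos ((s - 1) * t) - c * cos ((s + 1) * t).

Definition toeplitz_integrand (a b c s t : R) : R :=
  toeplitz_num a b c s t / sqrt (denom a b c t).

Lemma toeplitz_num_shift (a b c s t : R) (j : Z) :
  toeplitz_num a b c (s + IZR j) t
  = a * cos_shift s t j - b * cos_shift s t (j - 1) - c * cos_shift s t (j + 1).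
Proof.
  unfold toeplitz_num, cos_shift; rewrite minus_IZR, plus_IZR.
  unfold Rminus; rewrite !Rplus_assoc.
  reflexivity.
Qed.

(* [f j] stands for the value at index [s + j]. *)
Definition abc_recurrence (a b c s : R) (f : Z -> R) : R :=
  (3 - s) * b * c * f (-3)%Z
  + ((s - 1) * a * (b + c) - 3 / 2 * a * b - 1 / 2 * a * c) * f (-2)%Z
  + (- (s - 1) * (a ^ 2 + b ^ 2 + c ^ 2) + b ^ 2 - c ^ 2) * f (-1)%Z
  + ((s - 1) * a * (b + c) + 3 / 2 * a * c + 1 / 2 * a * b) * f 0%Z
  - (s + 1) * b * c * f 1%Z.

Lemma abc_recurrence_divr (a b c s d : R) (f : Z -> R) : d <> 0 ->
  abc_recurrence a b c s (fun j => f j / d) = abc_recurrence a b c s f / d.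
Proof. intros; unfold abc_recurrence; field; assumption. Qed.

Lemma abc_recurrence_toeplitz_num (a b c s t : R) :
  let M := comb3 (- a) b c (sin_shift s t) 0 in
  let M' := comb3 (- a * (s - 1)) (b * (s - 2)) (c * s) (cos_shift s t) 0 in
  abc_recurrence a b c s (fun j => toeplitz_num a b c (s + IZR j) t)
  = M' * denom a b c t + M * (2 * a * (b + c) * sin t - 4 * b * c * sin (2 * t)) / 2.
Proof.
  intros M M'.
  symmetry; transitivity ((a ^ 2 + b ^ 2 + c ^ 2) * M'
    - 2 * a * (b + c) * (M' * cos (IZR 1 * t)) + 2 * b * c * (M' * cos (IZR 2 * t))
    + a * (b + c) * (M * sin (IZR 1 * t)) - 2 * b * c * (M * sin (IZR 2 * t))).
  { unfold denom; rewrite Rmult_1_l; field. }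
  unfold M, M'.
  rewrite !comb3_cos_shift_mul_cos, !comb3_sin_shift_mul_sin.
  unfold abc_recurrence, comb3; rewrite !toeplitz_num_shift.
  cbn [Z.add Z.sub Z.opp Z.pos_sub Z.double Z.pred_double Z.succ_double
       Pos.add Pos.succ Pos.pred_double].
  field.
Qed.

Definition toeplitz_primitive (a b c s t : R) : R :=
  comb3 (- a) b c (sin_shift s t) 0 * sqrt (denom a b c t).

Lemma is_derive_comb3_sin_shift (a b c s t : R) :
  is_derive (fun t => comb3 (- a) b c (sin_shift s t) 0) t
    (comb3 (- a * (s - 1)) (b * (s - 2)) (c * s) (cos_shift s t) 0).
Proof.
  unfold comb3, sin_shift, cos_shift.
  cbn [Z.sub Z.add Z.opp Z.pos_sub Z.pred_double Pos.pred_double].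
  auto_derive; trivial; ring.
Qed.

Lemma is_derive_denom (a b c t : R) :
  is_derive (denom a b c) t (2 * a * (b + c) * sin t - 4 * b * c * sin (2 * t)).
Proof. unfold denom; auto_derive; trivial; ring. Qed.

Lemma is_derive_toeplitz_primitive (a b c s t : R) : 0 < denom a b c t ->
  is_derive (toeplitz_primitive a b c s) t
    (abc_recurrence a b c s (fun j => toeplitz_integrand a b c (s + IZR j) t)).
Proof.
  intros Hpos.
  assert (Hq : 0 < sqrt (denom a b c t)) by now apply sqrt_lt_R0.
  assert (Hqq : sqrt (denom a b c t) * sqrt (denom a b c t) = denom a b c t)
    by now apply sqrt_sqrt, Rlt_le.
  unfold toeplitz_integrand; rewrite abc_recurrence_divr, abc_recurrence_toeplitz_num by lra.
  cbv zeta; unfold toeplitz_primitive.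
  set (q := sqrt (denom a b c t)) in *.
  set (D' := 2 * a * (b + c) * sin t - 4 * b * c * sin (2 * t)).
  set (M := comb3 (- a) b c (sin_shift s t) 0).
  set (M' := comb3 (- a * (s - 1)) (b * (s - 2)) (c * s) (cos_shift s t) 0).
  replace ((M' * denom a b c t + M * D' / 2) / q) with (M' * q + M * (D' / (2 * q)))
    by (rewrite <- Hqq; field; lra).
  apply (is_derive_mult (fun t => comb3 (- a) b c (sin_shift s t) 0)
           (fun t => sqrt (denom a b c t))).
  - apply is_derive_comb3_sin_shift.
  - apply is_derive_sqrt; [apply is_derive_denom | exact Hpos].
  - intros; apply Rmult_comm.
Qed.

Lemma continuous_toeplitz_integrand (a b c s t : R) : 0 < denom a b c t ->
  continuous (toeplitz_integrand a b c s) t.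
Proof.
  intros Hpos; assert (Hq : 0 < sqrt (denom a b c t)) by now apply sqrt_lt_R0.
  apply (ex_derive_continuous (V := R_NormedModule)).
  unfold toeplitz_integrand, toeplitz_num.
  auto_derive; repeat split; try lra.
  eexists; apply is_derive_denom.
Qed.

Lemma continuous_abc_recurrence (a b c s t : R) (g : Z -> R -> R) :
  (forall j, continuous (g j) t) ->
  continuous (fun t => abc_recurrence a b c s (fun j => g j t)) t.
Proof.
  intros Hg; unfold abc_recurrence.
  apply continuity_pt_filterlim.
  assert (Hg' : forall j, continuity_pt (g j) t) by (intros; apply continuity_pt_filterlim, Hg).
  repeat first [ apply continuity_pt_minus | apply continuity_pt_plus
               | apply continuity_pt_mult | apply Hg'
               | apply continuity_pt_const; intros ?; reflexivity ].
Qed.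

Lemma is_RInt_abc_recurrence (a b c s lo hi : R) (g : Z -> R -> R) (I : Z -> R) :
  (forall j, is_RInt (g j) lo hi (I j)) ->
  is_RInt (fun t => abc_recurrence a b c s (fun j => g j t)) lo hi (abc_recurrence a b c s I).
Proof.
  intros Hg; unfold abc_recurrence.
  assert (Hscal : forall k j, is_RInt (fun t => k * g j t) lo hi (k * I j))
    by (intros; apply (is_RInt_scal (V := R_NormedModule)), Hg).
  apply (is_RInt_minus (V := R_NormedModule)); [| apply Hscal].
  apply (is_RInt_plus (V := R_NormedModule)); [| apply Hscal].
  apply (is_RInt_plus (V := R_NormedModule)); [| apply Hscal].
  apply (is_RInt_plus (V := R_NormedModule)); apply Hscal.
Qed.

Lemma toeplitz_primitive_IZR_mul_PI (a b c : R) (n k : Z) :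
  toeplitz_primitive a b c (IZR n) (IZR k * PI) = 0.
Proof. unfold toeplitz_primitive, comb3; rewrite !sin_shift_IZR_mul_PI; ring. Qed.

Lemma wn_RInt_toeplitz_integrand (a b c : R) (n : Z) :
  wn a b c n = RInt (toeplitz_integrand a b c (IZR n)) (- PI) PI / (2 * PI).
Proof.
  unfold wn, toeplitz_integrand, toeplitz_num.
  rewrite minus_IZR, plus_IZR; reflexivity.
Qed.

Lemma wn_abc_recurrence (a b c : R)
  (Hpos : forall t, - PI <= t <= PI -> 0 < denom a b c t) (n : Z) :
  abc_recurrence a b c (IZR n) (fun j => wn a b c (n + j)) = 0.
Proof.
  pose proof PI_RGT_0 as HPI.
  assert (Hpos' : forall t, Rmin (- PI) PI <= t <= Rmax (- PI) PI -> 0 < denom a b c t)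
    by (rewrite Rmin_left, Rmax_right by lra; exact Hpos).
  set (I j := RInt (toeplitz_integrand a b c (IZR n + IZR j)) (- PI) PI).
  assert (Hlin : is_RInt (fun t => abc_recurrence a b c (IZR n)
                    (fun j => toeplitz_integrand a b c (IZR n + IZR j) t))
                  (- PI) PI (abc_recurrence a b c (IZR n) I)).
  { apply is_RInt_abc_recurrence; intros j.
    apply (RInt_correct (V := R_CompleteNormedModule)),
          (ex_RInt_continuous (V := R_CompleteNormedModule)).
    intros t Ht; apply continuous_toeplitz_integrand, Hpos', Ht. }
  assert (Hftc : is_RInt (fun t => abc_recurrence a b c (IZR n)
                    (fun j => toeplitz_integrand a b c (IZR n + IZR j) t))
                  (- PI) PI (minus (toeplitz_primitive a b c (IZR n) PI)
                                   (toeplitz_primitive a b c (IZR n) (- PI)))).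
  { apply (is_RInt_derive (V := R_CompleteNormedModule)); intros t Ht.
    - apply is_derive_toeplitz_primitive, Hpos', Ht.
    - apply continuous_abc_recurrence; intros j.
      apply continuous_toeplitz_integrand, Hpos', Ht. }
  assert (HI : abc_recurrence a b c (IZR n) I = 0).
  { rewrite <- (is_RInt_unique _ _ _ _ Hlin), (is_RInt_unique _ _ _ _ Hftc).
    replace (- PI) with (IZR (-1) * PI) by ring.
    rewrite <- (Rmult_1_l PI) at 1.
    rewrite !toeplitz_primitive_IZR_mul_PI; exact (minus_eq_zero (G := R_AbelianGroup) 0). }
  transitivity (abc_recurrence a b c (IZR n) I / (2 * PI)).
  - rewrite <- abc_recurrence_divr by lra; unfold abc_recurrence, I.
    rewrite !wn_RInt_toeplitz_integrand, !plus_IZR; reflexivity.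
  - rewrite HI; field; lra.
Qed.

Lemma zv_vv (K : R) : zv K = (1 - vv K) / (1 + vv K).
Proof.
  unfold zv, Defs.tanh, vv.
  replace (-2 * K) with (- K + - K) by ring; rewrite exp_plus, exp_Ropp.
  pose proof (exp_pos K).
  field; split; nra.
Qed.

Definition v_recurrence (v1 v2 v3 s : R) (f : Z -> R) : R :=
  let Gamma := 1 + v1 ^ 2 * v2 ^ 2 - (v1 ^ 2 + v2 ^ 2) * v3 ^ 2 in
  (s - 3) * v1 ^ 2 * v2 ^ 2 * (1 - v3 ^ 2) ^ 2 * f (-3)%Z
  - 2 * v1 * v2 * Gamma * (v3 + (s - 2) * (1 + v3 ^ 2)) * f (-2)%Z
  + ((s - 1) * (v1 ^ 4 + 4 * v1 ^ 2 * v2 ^ 2 + v2 ^ 4) * v3 ^ 4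
     - 2 * (s - 1) * (v1 ^ 2 + v2 ^ 2 - 6 * v1 ^ 2 * v2 ^ 2 + v1 ^ 4 * v2 ^ 2
                      + v1 ^ 2 * v2 ^ 4) * v3 ^ 2
     + (s - 1) * (1 + 4 * v1 ^ 2 * v2 ^ 2 + v1 ^ 4 * v2 ^ 4)
     + 8 * v1 ^ 2 * v2 ^ 2 * v3 * (1 + v3 ^ 2)) * f (-1)%Z
  - 2 * v1 * v2 * Gamma * (v3 + s * (1 + v3 ^ 2)) * f 0%Z
  + (s + 1) * v1 ^ 2 * v2 ^ 2 * (1 - v3 ^ 2) ^ 2 * f 1%Z.

Lemma v_recurrence_abc (z1 z2 z3 v1 v2 v3 s : R) (f : Z -> R) :
  1 + v1 <> 0 -> 1 + v2 <> 0 -> 1 + v3 <> 0 ->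
  z1 = (1 - v1) / (1 + v1) -> z2 = (1 - v2) / (1 + v2) -> z3 = (1 - v3) / (1 + v3) ->
  v_recurrence v1 v2 v3 s f
  = - ((1 + v1) * (1 + v2) * (1 + v3)) ^ 4 / 256
    * abc_recurrence (coef_a z1 z2 z3) (coef_b z1 z2 z3) (coef_c z1 z2 z3) s f.
Proof.
  intros H1 H2 H3 -> -> ->.
  unfold v_recurrence, abc_recurrence, coef_a, coef_b, coef_c; field; auto.
Qed.

Theorem corollary2 (K1 K2 K3 : R)
  (Hsqrt : forall theta, - PI <= theta <= PI ->
     0 < denom (coef_a (zv K1) (zv K2) (zv K3)) (coef_b (zv K1) (zv K2) (zv K3))
               (coef_c (zv K1) (zv K2) (zv K3)) theta)
  (n : Z) :
  let v1 := vv K1 in let v2 := vv K2 in let v3 := vv K3 in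
  let w := wK K1 K2 K3 in
  let Gamma := 1 + v1 ^ 2 * v2 ^ 2 - (v1 ^ 2 + v2 ^ 2) * v3 ^ 2 in
  let m := IZR n in
  (m - 3) * v1 ^ 2 * v2 ^ 2 * (1 - v3 ^ 2) ^ 2 * w (n - 3)%Z
  - 2 * v1 * v2 * Gamma * (v3 + (m - 2) * (1 + v3 ^ 2)) * w (n - 2)%Z
  + ((m - 1) * (v1 ^ 4 + 4 * v1 ^ 2 * v2 ^ 2 + v2 ^ 4) * v3 ^ 4
     - 2 * (m - 1) * (v1 ^ 2 + v2 ^ 2 - 6 * v1 ^ 2 * v2 ^ 2 + v1 ^ 4 * v2 ^ 2
                      + v1 ^ 2 * v2 ^ 4) * v3 ^ 2
     + (m - 1) * (1 + 4 * v1 ^ 2 * v2 ^ 2 + v1 ^ 4 * v2 ^ 4)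
     + 8 * v1 ^ 2 * v2 ^ 2 * v3 * (1 + v3 ^ 2)) * w (n - 1)%Z
  - 2 * v1 * v2 * Gamma * (v3 + m * (1 + v3 ^ 2)) * w n
  + (m + 1) * v1 ^ 2 * v2 ^ 2 * (1 - v3 ^ 2) ^ 2 * w (n + 1)%Z = 0.
Proof.
  intros v1 v2 v3 w Gamma m.
  replace (w n) with (w (n + 0)%Z) by now rewrite Z.add_0_r.
  change (v_recurrence v1 v2 v3 m (fun j => w (n + j)%Z) = 0).
  assert (Hv : forall K, 1 + vv K <> 0)
    by (intros K; pose proof (exp_pos (-2 * K)); unfold vv; lra).
  rewrite (v_recurrence_abc (zv K1) (zv K2) (zv K3)) by (apply Hv || apply zv_vv).
  apply Rmult_eq_0_compat_l, (wn_abc_recurrence _ _ _ Hsqrt n).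
Qed.
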